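(* Let $\mathcal F$ be a field and let $p\in\mathbb N$. Let $\mathbf{Mat}_{\mathcal F}$ be the category whose objects are natural numbers, whose arrows $M\colon m\to n$ are $n\times m$ matrices with entries in $\mathcal F$, and whose composition is matrix multiplication. Let $F\colon \mathbf{Mat}_{\mathcal F}\to\mathbf{Mat}_{\mathcal F}$ be the functor with $F(n)=p\cdot n$ on objects and $F(M)=I_p\otimes M$ (Kronecker product with the $p\times p$ identity matrix) on arrows. Then there exist families of matrices $\varphi=(\varphi_n\colon p^2n\to n)_{n}$, $\gamma=(\gamma_n\colon n\to p^2n)_n$ and $\chi=(\chi_n\colon p^2n\to p^2n)_n$ such that $\langle \mathbf{Mat}_{\mathcal F},F,\varphi,\gamma,\chi\rangle$ is a symmetric self-adjunction.
   Context: A symmetric self-adjunction is a quintuple $\langle\mathcal A,F,\varphi,\gamma,\chi\rangle$ where $\mathcal A$ is a category, $F\colon\mathcal A\to\mathcal A$ is a functor, and $\varphi\colon FF\to 1_{\mathcal A}$, $\gamma\colon 1_{\mathcal A}\to FF$, $\chi\colon FF\to FF$ are natural transformations such that for all objects $A$: $\varphi_{FA}\circ F\gamma_A=1_{FA}$ and $F\varphi_A\circ\gamma_{FA}=1_{FA}$ (triangular equations, i.e. $F$ is adjoint to itself with counit $\varphi$ and unit $\gamma$); $\chi_A\circ\chi_A=1_{FFA}$; $\chi_{FA}\circ F\chi_A\circ\chi_{FA}=F\chi_A\circ\chi_{FA}\circ F\chi_A$; $\varphi_A\circ\chi_A=\varphi_A$; $\chi_A\circ\gamma_A=\gamma_A$;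 $\varphi_{FA}\circ F\chi_A=F\varphi_A\circ\chi_{FA}$; $\chi_{FA}\circ F\gamma_A=F\chi_A\circ\gamma_{FA}$. *)

From mathcomp Require Import all_boot all_algebra.
From mathcomp Require Import mxtens.
Set Implicit Arguments. Unset Strict Implicit. Unset Printing Implicit Defensive.
Import GRing.Theory.
Local Open Scope ring_scope.

(* The category Mat_K: objects are natural numbers, an arrow m -> n is an
   n x m matrix 'M[K]_(n, m), composition (N o M) is N *m M, identities 1%:M. *)

Definition is_functor (K : fieldType) (Fo : nat -> nat)
  (Fa : forall m n : nat, 'M[K]_(n, m) -> 'M[K]_(Fo n, Fo m)) : Prop :=
  (forall n : nat, Fa n n (1%:M : 'M[K]_n) = 1%:M) /\
  (forall (m n k : nat) (M : 'M[K]_(n, m)) (N : 'M[K]_(k, n)),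
      Fa m k (N *m M) = Fa n k N *m Fa m n M).

Definition sym_self_adjunction (K : fieldType) (Fo : nat -> nat)
  (Fa : forall m n : nat, 'M[K]_(n, m) -> 'M[K]_(Fo n, Fo m))
  (phi : forall n : nat, 'M[K]_(n, Fo (Fo n)))
  (gamma : forall n : nat, 'M[K]_(Fo (Fo n), n))
  (chi : forall n : nat, 'M[K]_(Fo (Fo n))) : Prop :=
  is_functor Fa /\
  (forall (m n : nat) (M : 'M[K]_(n, m)),
      phi n *m Fa _ _ (Fa _ _ M) = M *m phi m) /\
  (forall (m n : nat) (M : 'M[K]_(n, m)),
      gamma n *m M = Fa _ _ (Fa _ _ M) *m gamma m) /\
  (forall (m n : nat) (M : 'M[K]_(n, m)),
      chi n *m Fa _ _ (Fa _ _ M) = Fa _ _ (Fa _ _ M) *m chi m) /\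
  (forall n : nat, phi (Fo n) *m Fa _ _ (gamma n) = 1%:M) /\
  (forall n : nat, Fa _ _ (phi n) *m gamma (Fo n) = 1%:M) /\
  (forall n : nat, chi n *m chi n = 1%:M) /\
  (forall n : nat, chi (Fo n) *m Fa _ _ (chi n) *m chi (Fo n)
                 = Fa _ _ (chi n) *m chi (Fo n) *m Fa _ _ (chi n)) /\
  (forall n : nat, phi n *m chi n = phi n) /\
  (forall n : nat, chi n *m gamma n = gamma n) /\
  (forall n : nat, phi (Fo n) *m Fa _ _ (chi n) = Fa _ _ (phi n) *m chi (Fo n)) /\
  (forall n : nat, chi (Fo n) *m Fa _ _ (gamma n) = Fa _ _ (chi n) *m gamma (Fo n)).

Definition Fobj (p : nat) (n : nat) : nat := p * n.
Definition Farr (K : fieldType) (p : nat) (m n : nat) (M : 'M[K]_(n, m))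
  : 'M[K]_(Fobj p n, Fobj p m) := tensmx (1%:M : 'M[K]_p) M.

From mathcomp Require Import all_boot all_algebra.
From mathcomp Require Import mxtens.
Set Implicit Arguments. Unset Strict Implicit. Unset Printing Implicit Defensive.
Import GRing.Theory.
Local Open Scope ring_scope.

(* Identify the object p * (p * n) with K^p (x) K^p (x) K^n.  Then the counit
   contracts the two K^p factors, [phi (e_i (x) e_j (x) y) = [i = j] y], the unit
   inserts the canonical tensor, [gamma y = sum_i e_i (x) e_i (x) y], and the
   symmetry swaps them, [chi (e_i (x) e_j (x) y) = e_j (x) e_i (x) y].  Since
   [F M] acts as [e_i (x) y |-> e_i (x) M y], every axiom is an identity between
   such elementary tensor manipulations, checked on basis vectors. *)

Local Notation "''b_' i" := (delta_mx i 0 : 'cV_ _) (at level 8, i at level 2).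

Section KroneckerBasis.
Variable K : fieldType.

Lemma colvec_sum_delta n (y : 'cV[K]_n) : y = \sum_c y c 0 *: 'b_c.
Proof. by rewrite {1}[y]matrix_sum_delta; apply: eq_bigr => c _; rewrite big_ord1. Qed.

Lemma tensmxZr m n r s (A : 'M[K]_(m, n)) (a : K) (B : 'M[K]_(r, s)) :
  A *t (a *: B) = a *: (A *t B).
Proof. by apply/matrixP=> i j; rewrite !mxE mulrCA. Qed.

Lemma tensmx_sumr m n r s I (P : seq I) (A : 'M[K]_(m, n)) (B : I -> 'M[K]_(r, s)) :
  A *t (\sum_(i <- P) B i) = \sum_(i <- P) A *t B i.
Proof.
apply/matrixP=> i j; rewrite !mxE !summxE mulr_sumr.
by apply: eq_bigr => k _; rewrite !mxE.
Qed.

Lemma tens_delta_mx m q (i : 'I_m) (k : 'I_q) :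
  'b_i *t 'b_k = 'b_(mxtens_index (i, k)) :> 'cV[K]_(m * q).
Proof.
apply/matrixP=> r z; case: (mxtens_indexP r) => a b.
rewrite !mxE !mxtens_indexK /= !ord1 (can_eq (@mxtens_indexK m q)) xpair_eqE.
by case: (a == i); case: (b == k); rewrite ?mulr1 ?mulr0.
Qed.

Lemma tens2_sum_delta m m' n (i : 'I_m) (j : 'I_m') (y : 'cV[K]_n) :
  'b_i *t ('b_j *t y) = \sum_c y c 0 *: ('b_i *t ('b_j *t 'b_c)).
Proof.
rewrite {1}[y]colvec_sum_delta !tensmx_sumr.
by apply: eq_bigr => c _; rewrite !tensmxZr.
Qed.

Lemma col_ext r n (A B : 'M[K]_(r, n)) :
  (forall c, A *m 'b_c = B *m 'b_c) -> A = B.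
Proof.
move=> eqAB; apply/matrixP=> i c.
by move/matrixP: (eqAB c) => /(_ i 0); rewrite -!colE !mxE.
Qed.

Lemma tens1_ext r m n (A B : 'M[K]_(r, m * n)) :
  (forall i c, A *m ('b_i *t 'b_c) = B *m ('b_i *t 'b_c)) -> A = B.
Proof.
move=> eqAB; apply: col_ext => x; case: (mxtens_indexP x) => i c.
by rewrite -tens_delta_mx.
Qed.

Lemma tens2_ext r m m' n (A B : 'M[K]_(r, m * (m' * n))) :
  (forall i j c, A *m ('b_i *t ('b_j *t 'b_c)) = B *m ('b_i *t ('b_j *t 'b_c))) ->
  A = B.
Proof.
move=> eqAB; apply: col_ext => x; case: (mxtens_indexP x) => i x'.
by case: (mxtens_indexP x') => j c; rewrite -!tens_delta_mx.
Qed.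

Lemma tens3_ext r m m' m'' n (A B : 'M[K]_(r, m * (m' * (m'' * n)))) :
  (forall i j l c, A *m ('b_i *t ('b_j *t ('b_l *t 'b_c)))
                 = B *m ('b_i *t ('b_j *t ('b_l *t 'b_c)))) ->
  A = B.
Proof.
move=> eqAB; apply: col_ext => x; case: (mxtens_indexP x) => i x'.
case: (mxtens_indexP x') => j x''; case: (mxtens_indexP x'') => l c.
by rewrite -!tens_delta_mx.
Qed.

Definition mx_of_cols r n (f : 'I_n -> 'cV[K]_r) : 'M[K]_(r, n) :=
  \matrix_(i, j) f j i 0.

Lemma mx_of_cols_delta r n (f : 'I_n -> 'cV[K]_r) c : mx_of_cols f *m 'b_c = f c.
Proof. by rewrite -colE; apply/matrixP=> i j; rewrite !mxE ord1. Qed.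

Definition tens2_mx_of_cols r m m' n (f : 'I_m -> 'I_m' -> 'I_n -> 'cV[K]_r)
  : 'M[K]_(r, m * (m' * n)) :=
  mx_of_cols (fun x => let: (i, x') := mxtens_unindex x in
                       let: (j, c) := mxtens_unindex x' in f i j c).

Lemma tens2_mx_of_cols_delta r m m' n (f : 'I_m -> 'I_m' -> 'I_n -> 'cV[K]_r) i j c :
  tens2_mx_of_cols f *m ('b_i *t ('b_j *t 'b_c)) = f i j c.
Proof.
rewrite !tens_delta_mx mx_of_cols_delta mxtens_indexK; cbv beta iota.
by rewrite mxtens_indexK.
Qed.

End KroneckerBasis.

Section SelfAdjunction.
Variables (K : fieldType) (p : nat).

Local Notation F := (@Farr K p _ _).

Definition counit_mx n : 'M[K]_(n, p * (p * n)) :=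
  tens2_mx_of_cols (fun i j c => (i == j)%:R *: 'b_c).

Definition unit_mx n : 'M[K]_(p * (p * n), n) :=
  mx_of_cols (fun c => \sum_(i < p) 'b_i *t ('b_i *t 'b_c)).

Definition swap_mx n : 'M[K]_(p * (p * n)) :=
  tens2_mx_of_cols (fun i j c => 'b_j *t ('b_i *t 'b_c)).

Lemma Farr_tens m n (M : 'M[K]_(n, m)) (i : 'I_p) (y : 'cV[K]_m) :
  F M *m ('b_i *t y) = 'b_i *t (M *m y).
Proof. by rewrite /Farr tensmx_mul mul1mx. Qed.

Lemma Farr_is_functor : is_functor (@Farr K p).
Proof.
split=> [n | m n k M N]; last by rewrite /Farr tensmx_mul mulmx1.
by apply: tens1_ext => i c; rewrite Farr_tens !mul1mx.
Qed.

Lemma counit_tens n i j (y : 'cV[K]_n) :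
  counit_mx n *m ('b_i *t ('b_j *t y)) = (i == j)%:R *: y.
Proof.
rewrite tens2_sum_delta mulmx_sumr {2}[y]colvec_sum_delta scaler_sumr.
apply: eq_bigr => c _.
by rewrite -scalemxAr tens2_mx_of_cols_delta !scalerA mulrC.
Qed.

Lemma unit_col n (y : 'cV[K]_n) :
  unit_mx n *m y = \sum_(i < p) 'b_i *t ('b_i *t y).
Proof.
rewrite {1}[y]colvec_sum_delta mulmx_sumr.
rewrite (eq_bigr _ (fun i _ => tens2_sum_delta i i y)) exchange_big /=.
by apply: eq_bigr => c _; rewrite -scalemxAr mx_of_cols_delta scaler_sumr.
Qed.

Lemma swap_tens n i j (y : 'cV[K]_n) :
  swap_mx n *m ('b_i *t ('b_j *t y)) = 'b_j *t ('b_i *t y).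
Proof.
rewrite tens2_sum_delta mulmx_sumr [RHS]tens2_sum_delta.
by apply: eq_bigr => c _; rewrite -scalemxAr tens2_mx_of_cols_delta.
Qed.

Lemma counit_natural m n (M : 'M[K]_(n, m)) :
  counit_mx n *m F (F M) = M *m counit_mx m.
Proof.
apply: tens2_ext => i j c.
by rewrite -!mulmxA !Farr_tens !counit_tens scalemxAr.
Qed.

Lemma unit_natural m n (M : 'M[K]_(n, m)) :
  unit_mx n *m M = F (F M) *m unit_mx m.
Proof.
apply: col_ext => c; rewrite -!mulmxA !unit_col mulmx_sumr.
by apply: eq_bigr => i _; rewrite !Farr_tens.
Qed.

Lemma swap_natural m n (M : 'M[K]_(n, m)) :
  swap_mx n *m F (F M) = F (F M) *m swap_mx m.
Proof.
apply: tens2_ext => i j c.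
by rewrite -!mulmxA !Farr_tens !swap_tens !Farr_tens.
Qed.

Lemma counit_F_unit n : counit_mx (p * n) *m F (unit_mx n) = 1%:M.
Proof.
apply: tens1_ext => i c.
rewrite -mulmxA Farr_tens unit_col tensmx_sumr mulmx_sumr mul1mx.
rewrite (bigD1 i) //= counit_tens eqxx scale1r big1 ?addr0 // => j ji.
by rewrite counit_tens eq_sym (negbTE ji) scale0r.
Qed.

Lemma F_counit_unit n : F (counit_mx n) *m unit_mx (p * n) = 1%:M.
Proof.
apply: tens1_ext => i c.
rewrite -mulmxA unit_col mulmx_sumr mul1mx.
rewrite (eq_bigr _ (fun j _ => Farr_tens _ _ _)).
rewrite (bigD1 i) //= counit_tens eqxx scale1r big1 ?addr0 // => j ji.
by rewrite counit_tens (negbTE ji) scale0r tensmx0.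
Qed.

Lemma swap_involutive n : swap_mx n *m swap_mx n = 1%:M.
Proof. by apply: tens2_ext => i j c; rewrite -mulmxA !swap_tens mul1mx. Qed.

Lemma swap_braid n :
  swap_mx (p * n) *m F (swap_mx n) *m swap_mx (p * n)
  = F (swap_mx n) *m swap_mx (p * n) *m F (swap_mx n).
Proof.
by apply: tens3_ext => i j l c; rewrite -!mulmxA !(Farr_tens, swap_tens).
Qed.

Lemma counit_swap n : counit_mx n *m swap_mx n = counit_mx n.
Proof. by apply: tens2_ext => i j c; rewrite -mulmxA swap_tens !counit_tens eq_sym. Qed.

Lemma swap_unit n : swap_mx n *m unit_mx n = unit_mx n.
Proof.
apply: col_ext => c; rewrite -mulmxA !unit_col mulmx_sumr.
by apply: eq_bigr => i _; rewrite swap_tens.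
Qed.

Lemma counit_F_swap n :
  counit_mx (p * n) *m F (swap_mx n) = F (counit_mx n) *m swap_mx (p * n).
Proof.
apply: tens3_ext => i j l c.
rewrite -!mulmxA Farr_tens swap_tens !counit_tens.
by rewrite swap_tens Farr_tens counit_tens tensmxZr.
Qed.

Lemma swap_F_unit n :
  swap_mx (p * n) *m F (unit_mx n) = F (swap_mx n) *m unit_mx (p * n).
Proof.
apply: tens1_ext => i c.
rewrite -!mulmxA Farr_tens !unit_col tensmx_sumr !mulmx_sumr.
by apply: eq_bigr => j _; rewrite swap_tens Farr_tens swap_tens.
Qed.

End SelfAdjunction.

Theorem mainTheorem1 (K : fieldType) (p : nat) :
  exists (phi : forall n : nat, 'M[K]_(n, Fobj p (Fobj p n)))
         (gamma : forall n : nat, 'M[K]_(Fobj p (Fobj p n), n))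
         (chi : forall n : nat, 'M[K]_(Fobj p (Fobj p n))),
    sym_self_adjunction (@Farr K p) phi gamma chi.
Proof.
exists (@counit_mx K p), (@unit_mx K p), (@swap_mx K p).
split; first exact: Farr_is_functor.
split; first exact: counit_natural.
split; first exact: unit_natural.
split; first exact: swap_natural.
split; first exact: counit_F_unit.
split; first exact: F_counit_unit.
split; first exact: swap_involutive.
split; first exact: swap_braid.
split; first exact: counit_swap.
split; first exact: swap_unit.
split; first exact: counit_F_swap.
exact: swap_F_unit.
Qed.
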